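(* Let $k$ be a field of characteristic zero, $A_1=k[t,\partial]$ the first Weyl algebra ($\partial t-t\partial=1$), $Q_1$ its quotient division ring, and let $I$ be a non-zero right ideal of $A_1$. Then there exists an element $f\in I$, unique up to multiplication by an element of $k^*$, such that the set of elements of $I$ of minimal $t$-degree (together with $0$) is exactly $f\,k[\partial]$. Likewise, there exists an element $e^*\in I^*$, unique up to multiplication by an element of $k^*$, such that the set of elements of $I^*$ of minimal $t$-degree (together with $0$) is exactly $k[\partial]\,e^*$.
   Context: $I^*$ denotes the dual of $I$ as a left $A_1$-module, identified with $\{u\in Q_1: uI\subseteq A_1\}$. The $t$-degree $\deg_t$ is the degree in $t$ coming from the inclusion $A_1\subset k(\partial)[t]$, extended to $Q_1$ (the quotient division ring of $k(\partial)[t]$) by $\deg_t(ab^{-1})=\deg_t a-\deg_t b$. *)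

From HB Require Import structures.
From mathcomp Require Import all_boot all_order all_algebra.
Set Implicit Arguments. Unset Strict Implicit. Unset Printing Implicit Defensive.
Import Order.TTheory GRing.Theory Num.Theory.
Local Open Scope ring_scope.

(* Setting: k a field, Q a k-algebra which is a division ring, containing
   elements t, d (d = "partial") generating the first Weyl algebra A_1,
   and such that Q is the (classical) quotient division ring of A_1. *)

Section Weyl.
Variables (k : fieldType) (Q : unitAlgType k) (t d : Q).

Definition division_ring := forall x : Q, x != 0 -> x \is a GRing.unit.

Definition weyl (x : Q) : Prop :=
  exists (n : nat) (c : 'I_n -> 'I_n -> k),
    x = \sum_(i < n) \sum_(j < n) c i j *: (t ^+ i * d ^+ j).

(* Q_1 is the quotient division ring of the Weyl algebra A_1 = k[t,d]:
   d t - t d = 1, the monomials t^i d^j are k-linearly independent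
   (so the subalgebra generated by t, d is the Weyl algebra), Q is a
   division ring and every element of Q has the form a b^-1, a, b in A_1. *)
Definition weyl_quotient : Prop :=
  [/\ d * t - t * d = 1,
      (forall (n : nat) (c : 'I_n -> 'I_n -> k),
          \sum_(i < n) \sum_(j < n) c i j *: (t ^+ i * d ^+ j) = 0 ->
          forall i j, c i j = 0),
      division_ring &
      forall u : Q, exists a b, [/\ weyl a, weyl b, b != 0 & u = a * b^-1]].

Definition polyd (p : {poly k}) : Q := \sum_(i < size p) p`_i *: d ^+ i.

Definition kd (r : Q) : Prop :=
  exists p q : {poly k}, q != 0 /\ r = polyd p * (polyd q)^-1.

Definition tpoly_deg (x : Q) (n : nat) : Prop :=
  exists r : nat -> Q, [/\ forall i, kd (r i), r n != 0 &
                           x = \sum_(i < n.+1) r i * t ^+ i].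

Definition tdeg (u : Q) (m : int) : Prop :=
  exists a b (p q : nat),
    [/\ tpoly_deg a p, tpoly_deg b q, u = a * b^-1 & m = p%:Z - q%:Z].

Definition right_ideal (I : Q -> Prop) : Prop :=
  [/\ forall x, I x -> weyl x,
      I 0,
      forall x y, I x -> I y -> I (x + y) &
      forall x a, I x -> weyl a -> I (x * a)].

Definition dual (I : Q -> Prop) (u : Q) : Prop :=
  forall x, I x -> weyl (u * x).

Definition mindeg (S : Q -> Prop) (u : Q) : Prop :=
  [/\ S u, u != 0 &
      exists m, tdeg u m /\
        forall v n, S v -> v != 0 -> tdeg v n -> (m <= n)%R].

End Weyl.

From HB Require Import structures.
From mathcomp Require Import all_boot all_order all_algebra.
From mathcomp Require Import zify.
From Stdlib Require Import Classical.
Set Implicit Arguments. Unset Strict Implicit. Unset Printing Implicit Defensive.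
Import GRing.Theory.
Local Open Scope ring_scope.

(* The t-degree of a nonzero element of A_1 is the nilpotency index of
   ad_d = [d, _]: ad_d t = 1 and ad_d kills k(d), so ad_d^m x = m! h(d) when x
   has t-degree m and leading coefficient h(d). By the Leibniz rule and
   char k = 0 this index is additive on products in the division ring Q_1,
   which makes deg_t well defined there. In a k[d]-module S inside A_1 (I as a
   right module, I^* x0 as a left one for a nonzero x0 in I), an element f of
   minimal t-degree whose leading coefficient has minimal degree generates all
   elements of minimal t-degree: dividing leading coefficients by that of f
   leaves a remainder that would be smaller. Uniqueness up to k^* holds
   because the units of k[d] are the nonzero constants. *)

Lemma ex_minn_prop (P : nat -> Prop) : (exists n, P n) ->
  exists n, P n /\ forall j, P j -> (n <= j)%N.
Proof.
move=> [n Pn]; elim/ltn_ind: n Pn => n IH Pn.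
case: (classic (exists2 j, P j & (j < n)%N)) => [[j Pj ltjn]|nosmaller].
  exact: IH ltjn Pj.
exists n; split => // j Pj; rewrite leqNgt; apply/negP => ltjn.
by apply: nosmaller; exists j.
Qed.

Section Derivation.
Variables (k : fieldType) (Q : unitAlgType k) (d : Q).

Lemma polydE p : polyd d p = horner_alg d p.
Proof.
rewrite /horner_alg /horner_morph horner_coef /polyd size_map_poly.
by apply: eq_bigr => i _; rewrite coef_map /= mulr_algl.
Qed.

Lemma polyd0 : polyd d 0 = 0. Proof. by rewrite polydE rmorph0. Qed.
Lemma polyd1 : polyd d 1 = 1. Proof. by rewrite polydE rmorph1. Qed.
Lemma polydD p q : polyd d (p + q) = polyd d p + polyd d q.
Proof. by rewrite !polydE rmorphD. Qed.
Lemma polydB p q : polyd d (p - q) = polyd d p - polyd d q.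
Proof. by rewrite !polydE rmorphB. Qed.
Lemma polydM p q : polyd d (p * q) = polyd d p * polyd d q.
Proof. by rewrite !polydE rmorphM. Qed.
Lemma polydC c : polyd d c%:P = c%:A.
Proof. by rewrite polydE horner_algC. Qed.
Lemma polydZ c p : polyd d (c *: p) = c *: polyd d p.
Proof. by rewrite -mul_polyC polydM polydC mulr_algl. Qed.
Lemma polydX : polyd d 'X = d.
Proof. by rewrite polydE horner_algX. Qed.
Lemma polydXn j : polyd d 'X^j = d ^+ j.
Proof. by rewrite polydE rmorphXn /= horner_algX. Qed.

Lemma polyd_comm p q : polyd d p * polyd d q = polyd d q * polyd d p.
Proof. by rewrite -!polydM mulrC. Qed.

Lemma kd_polyd p : kd d (polyd d p).
Proof. by exists p, 1; rewrite oner_neq0 polyd1 invr1 mulr1. Qed.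

Definition ad (x : Q) := d * x - x * d.

Fact ad_is_linear : linear ad.
Proof.
move=> c x y; rewrite /ad mulrDr mulrDl opprD addrACA.
by rewrite -!scalerAr -!scalerAl scalerBr.
Qed.
HB.instance Definition _ := GRing.isLinear.Build k Q Q *:%R ad ad_is_linear.

Definition adn n := iter n ad.

Lemma adnS n x : adn n.+1 x = ad (adn n x).
Proof. by []. Qed.

Lemma adnSr n x : adn n.+1 x = adn n (ad x).
Proof. by rewrite /adn iterSr. Qed.

Fact adn_is_linear n : linear (adn n).
Proof. by elim: n => [|n IH] c x y //; rewrite !adnSr linearP IH. Qed.
HB.instance Definition _ n :=
  GRing.isLinear.Build k Q Q *:%R (adn n) (adn_is_linear n).

Lemma adn0 n : adn n 0 = 0. Proof. exact: raddf0. Qed.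
Lemma adnD n x y : adn n (x + y) = adn n x + adn n y. Proof. exact: raddfD. Qed.
Lemma adnB n x y : adn n (x - y) = adn n x - adn n y. Proof. exact: raddfB. Qed.
Lemma adn_sum n m (F : 'I_m -> Q) :
  adn n (\sum_(i < m) F i) = \sum_(i < m) adn n (F i).
Proof. exact: raddf_sum. Qed.

Lemma adn_addn n m x : adn (n + m) x = adn n (adn m x).
Proof. exact: iterD. Qed.

Lemma adn_eq0_leq n m x : adn n x = 0 -> (n <= m)%N -> adn m x = 0.
Proof. by move=> adx_eq0 /subnK <-; rewrite adn_addn adx_eq0 adn0. Qed.

Lemma adM x y : ad (x * y) = ad x * y + x * ad y.
Proof. by rewrite /ad mulrBl mulrBr !mulrA addrA subrK. Qed.

Lemma adn_mull n c y : ad c = 0 -> adn n (c * y) = c * adn n y.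
Proof. by move=> adc0; elim: n => // n IH; rewrite !adnS IH adM adc0 mul0r add0r. Qed.

Lemma adn_mulr n c y : ad c = 0 -> adn n (y * c) = adn n y * c.
Proof. by move=> adc0; elim: n => // n IH; rewrite !adnS IH adM adc0 mulr0 addr0. Qed.

Lemma ad_polyd p : ad (polyd d p) = 0.
Proof. by rewrite /ad -[X in X * _]polydX polyd_comm polydX subrr. Qed.

Lemma ad_inv x : ad x = 0 -> ad x^-1 = 0.
Proof.
move/eqP; rewrite subr_eq0 => /eqP dx_xd; have [ux|nux] := boolP (x \is a GRing.unit).
  by apply/eqP; rewrite subr_eq0 -{1}(mulKr ux d) -dx_xd -!mulrA mulrV ?mulr1.
by rewrite /ad (invr_out nux) dx_xd subrr.
Qed.

Lemma ad_kd r : kd d r -> ad r = 0.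
Proof.
by move=> [p [q [_ ->]]]; rewrite adM ad_inv !ad_polyd ?mul0r ?mulr0 ?addr0.
Qed.

(* Truncated Leibniz rule: only the middle term of ad^(n+m) (x y) survives. *)
Lemma adn_mul n m x y : adn n.+1 x = 0 -> adn m.+1 y = 0 ->
  adn (n + m).+1 (x * y) = 0 /\
  adn (n + m) (x * y) = 'C(n + m, n)%:R * (adn n x * adn m y).
Proof.
elim: n m x y => [|n IHn] m x y adx ady.
  by rewrite !add0n bin0 mul1r !adn_mull // ady mulr0.
elim: m x y adx ady => [|m IHm] x y adx ady.
  by rewrite !addn0 binn mul1r !adn_mulr // adx mul0r.
have adx' : adn n.+1 (ad x) = 0 by rewrite -adnSr.
have ady' : adn m.+1 (ad y) = 0 by rewrite -adnSr.
have [IH1 IH2] := IHn m.+1 (ad x) y adx' ady.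
have [IH1' IH2'] := IHm x (ad y) adx ady'.
rewrite addSnnS in IH1' IH2'; rewrite addSn; split.
  by rewrite adnSr adM adnD IH1 IH1' addr0.
by rewrite adnSr adM adnD IH2 IH2' -!adnSr -mulrDl -natrD binS addnC.
Qed.

Definition ad_deg x n := adn n x != 0 /\ adn n.+1 x = 0.

Lemma ad_deg_unique x n m : ad_deg x n -> ad_deg x m -> n = m.
Proof.
move=> [nx_neq0 nx_eq0] [mx_neq0 mx_eq0]; apply/eqP; rewrite eqn_leq.
apply/andP; split; rewrite leqNgt; apply/negP => lt.
  by case/eqP: nx_neq0; apply: adn_eq0_leq mx_eq0 lt.
by case/eqP: mx_neq0; apply: adn_eq0_leq nx_eq0 lt.
Qed.

Lemma ad1 : ad 1 = 0.
Proof. by rewrite /ad mulr1 mul1r subrr. Qed.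

Lemma ad_deg1 : ad_deg 1 0.
Proof. by split; rewrite ?oner_neq0 // adnS ad1. Qed.

Lemma ad_deg_neq0 x n : ad_deg x n -> x != 0.
Proof. by move=> [+ _]; apply: contraNneq => ->; rewrite adn0. Qed.

Definition dact (right : bool) p v := if right then v * polyd d p else polyd d p * v.

Lemma adn_dact s n p v : adn n (dact s p v) = dact s p (adn n v).
Proof. by case: s; [apply: adn_mulr | apply: adn_mull]; apply: ad_polyd. Qed.

Lemma dact_lead s n p h :
  dact s p (n%:R * polyd d h) = n%:R * polyd d (p * h).
Proof.
case: s; rewrite /dact polydM; first by rewrite -mulrA polyd_comm.
by rewrite mulr_natl mulrnAr -mulr_natl.
Qed.

Lemma dact0 s v : dact s 0 v = 0.
Proof. by case: s; rewrite /dact polyd0 ?mulr0 ?mul0r. Qed.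
Lemma dactv0 s p : dact s p 0 = 0.
Proof. by case: s; rewrite /dact ?mulr0 ?mul0r. Qed.
Lemma dact1 s v : dact s 1 v = v.
Proof. by case: s; rewrite /dact polyd1 ?mulr1 ?mul1r. Qed.
Lemma dactC s c v : dact s c%:P v = c *: v.
Proof. by case: s; rewrite /dact polydC ?mulr_algr ?mulr_algl. Qed.
Lemma dactB s p q v : dact s (p - q) v = dact s p v - dact s q v.
Proof. by case: s; rewrite /dact polydB ?mulrBr ?mulrBl. Qed.
Lemma dactM s p q v : dact s p (dact s q v) = dact s (p * q) v.
Proof.
by case: s; rewrite /dact polydM; [rewrite -mulrA polyd_comm | rewrite mulrA].
Qed.

End Derivation.

Section WeylQuotient.
Variables (k : fieldType) (Q : unitAlgType k) (t d : Q).
Hypothesis char0 : [pchar k] =i pred0.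
Hypothesis dt_commutator : d * t - t * d = 1.
Hypothesis monomials_free : forall (n : nat) (c : 'I_n -> 'I_n -> k),
  \sum_(i < n) \sum_(j < n) c i j *: (t ^+ i * d ^+ j) = 0 -> forall i j, c i j = 0.
Hypothesis Qdiv : division_ring Q.
Hypothesis Qfrac : forall u : Q,
  exists a b, [/\ weyl t d a, weyl t d b, b != 0 & u = a * b^-1].

Lemma polyd_eq0 p : (polyd d p == 0) = (p == 0).
Proof.
apply/eqP/eqP => [pd0|->]; last exact: polyd0.
apply/polyP => j; rewrite coef0; have [ltj|] := ltnP j (size p); last exact: nth_default.
pose c (i l : 'I_(size p)) := if val i == 0%N then p`_l else 0.
have p_gt0 : (0 < size p)%N by apply: leq_ltn_trans ltj.
apply: (monomials_free (c := c) _ (Ordinal p_gt0) (Ordinal ltj)); rewrite -[RHS]pd0.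
rewrite (bigD1 (Ordinal p_gt0)) //= [X in _ + X]big1 ?addr0.
  by apply: eq_bigr => i _; rewrite expr0 mul1r.
move=> i /negbTE i_neq0; apply: big1 => l _.
by rewrite /c -[val i == 0%N]/(i == Ordinal p_gt0) i_neq0 scale0r.
Qed.

Lemma mulQ_neq0 (x y : Q) : x != 0 -> y != 0 -> x * y != 0.
Proof.
move=> x_neq0; apply: contra_neq => xy0.
by rewrite -(mulKr (Qdiv x_neq0) y) xy0 mulr0.
Qed.

Lemma natrQ_neq0 n : (0 < n)%N -> (n%:R : Q) != 0.
Proof.
rewrite lt0n => n_neq0; rewrite -[n%:R]scaler_nat scaler_eq0 oner_eq0 orbF.
by move/pcharf0P: char0 => ->.
Qed.

Lemma lead_neq0 m h : h != 0 -> m`!%:R * polyd d h != 0.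
Proof. by rewrite -polyd_eq0; apply: mulQ_neq0; rewrite natrQ_neq0 ?fact_gt0. Qed.

Lemma ad_deg_mul x y n m :
  ad_deg d x n -> ad_deg d y m -> ad_deg d (x * y) (n + m).
Proof.
move=> [xn_neq0 xn_eq0] [ym_neq0 ym_eq0]; rewrite /ad_deg.
have [-> ->] := adn_mul xn_eq0 ym_eq0.
by split=> //; rewrite !mulQ_neq0 ?natrQ_neq0 ?bin_gt0 ?leq_addr.
Qed.

Lemma ad_t : ad d t = 1.
Proof. exact: dt_commutator. Qed.

Lemma adn_texp i : adn d i.+1 (t ^+ i) = 0 /\ adn d i (t ^+ i) = i`!%:R.
Proof.
elim: i => [|i [IH1 IH2]]; first by rewrite expr0 adnS ad1.
have adt2 : adn d 2 t = 0 by rewrite adnS adnSr ad_t ad1.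
have := adn_mul IH1 adt2; rewrite addn1 exprSr => -[-> ->]; split => //.
by rewrite IH2 adnSr ad_t mulr1 binSn factS natrM.
Qed.

Lemma adn_tpoly n (r : nat -> Q) : (forall i, ad d (r i) = 0) ->
  adn d n.+1 (\sum_(i < n.+1) r i * t ^+ i) = 0 /\
  adn d n (\sum_(i < n.+1) r i * t ^+ i) = n`!%:R * r n.
Proof.
move=> ad_r; rewrite !adn_sum; split.
  apply: big1 => i _; rewrite adn_mull //.
  by rewrite (adn_eq0_leq (adn_texp i).1 (ltn_ord i)) mulr0.
rewrite big_ord_recr /= big1 ?add0r.
  by rewrite adn_mull // (adn_texp n).2 mulr_natr mulr_natl.
move=> i _; rewrite adn_mull //.
by rewrite (adn_eq0_leq (adn_texp i).1 (ltn_ord i)) mulr0.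
Qed.

Lemma tpoly_deg_ad_deg x n : tpoly_deg t d x n -> ad_deg d x n.
Proof.
move=> [r [kd_r rn_neq0 ->]].
rewrite /ad_deg; have [-> ->] := adn_tpoly n (fun i => ad_kd (kd_r i)).
by rewrite mulQ_neq0 ?natrQ_neq0 ?fact_gt0.
Qed.

Definition monomial_sum n (c : nat -> nat -> k) :=
  \sum_(i < n) \sum_(j < n) c i j *: (t ^+ i * d ^+ j).

Lemma weyl_natP x : weyl t d x <-> exists n c, x = monomial_sum n c.
Proof.
split=> [[n [c ->]]|[n [c ->]]]; last by exists n, (fun i j : 'I_n => c i j).
pose c' i j :=
  if insub i is Some i' then if insub j is Some j' then c i' j' else 0 else 0.
by exists n, c'; apply: eq_bigr => i _; apply: eq_bigr => j _; rewrite /c' !valK.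
Qed.

Lemma monomial_sum_widen n N c : (n <= N)%N ->
  monomial_sum n c =
  monomial_sum N (fun i j => if (i < n)%N && (j < n)%N then c i j else 0).
Proof.
move=> leNn; rewrite /monomial_sum.
rewrite (big_ord_widen N (fun i => \sum_(j < n) c i j *: (t ^+ i * d ^+ j)) leNn).
rewrite big_mkcond; apply: eq_bigr => i _; case: ltnP => [lt_in|le_ni] /=.
  rewrite (big_ord_widen N (fun j => c i j *: (t ^+ i * d ^+ j)) leNn).
  rewrite big_mkcond; apply: eq_bigr => j _.
  by case: ltnP; rewrite ?scale0r.
by rewrite big1 // => j _; rewrite scale0r.
Qed.

Lemma weylD x y : weyl t d x -> weyl t d y -> weyl t d (x + y).
Proof.
move=> /weyl_natP[n1 [c1 ->]] /weyl_natP[n2 [c2 ->]]; apply/weyl_natP.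
rewrite (monomial_sum_widen _ (leq_addr n2 n1)).
rewrite (monomial_sum_widen _ (leq_addl n1 n2)).
exists (n1 + n2)%N, (fun i j =>
  (if (i < n1)%N && (j < n1)%N then c1 i j else 0) +
  (if (i < n2)%N && (j < n2)%N then c2 i j else 0)).
rewrite /monomial_sum -big_split; apply: eq_bigr => i _.
by rewrite -big_split; apply: eq_bigr => j _; rewrite scalerDl.
Qed.

Lemma weylZ a x : weyl t d x -> weyl t d (a *: x).
Proof.
move=> /weyl_natP[n [c ->]]; apply/weyl_natP; exists n, (fun i j => a * c i j).
rewrite /monomial_sum scaler_sumr; apply: eq_bigr => i _; rewrite scaler_sumr.
by apply: eq_bigr => j _; rewrite scalerA.
Qed.

Lemma weylB x y : weyl t d x -> weyl t d y -> weyl t d (x - y).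
Proof. by move=> wx wy; rewrite -scaleN1r; apply/weylD/weylZ. Qed.

Lemma weyl_sum m (F : 'I_m -> Q) :
  (forall i, weyl t d (F i)) -> weyl t d (\sum_(i < m) F i).
Proof.
move=> wF; elim/big_rec: _ => [|i x _ wx]; last exact: weylD.
by apply/weyl_natP; exists 0%N, (fun _ _ => 0); rewrite /monomial_sum big_ord0.
Qed.

Lemma weyl_monomial a b : weyl t d (t ^+ a * d ^+ b).
Proof.
apply/weyl_natP; exists (a + b).+1, (fun i j => ((i == a) && (j == b))%:R).
have lt_a : (a < (a + b).+1)%N by rewrite ltnS leq_addr.
have lt_b : (b < (a + b).+1)%N by rewrite ltnS leq_addl.
rewrite /monomial_sum (bigD1 (inord a)) //= [X in _ + X]big1 ?addr0; last first.
  move=> i /negbTE neq_ia; apply: big1 => j _.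
  by rewrite -(inj_eq val_inj) /= inordK // in neq_ia; rewrite neq_ia scale0r.
rewrite (bigD1 (inord b)) //= [X in _ + X]big1 ?addr0; last first.
  move=> j /negbTE neq_jb.
  by rewrite -(inj_eq val_inj) /= inordK // in neq_jb; rewrite neq_jb andbF scale0r.
by rewrite !inordK // !eqxx scale1r.
Qed.

Lemma weyl1 : weyl t d 1.
Proof. by have := weyl_monomial 0 0; rewrite !expr0 mul1r. Qed.

Lemma ad_texpS i : ad d (t ^+ i.+1) = t ^+ i *+ i.+1.
Proof.
elim: i => [|i IH]; first by rewrite expr1 expr0 ad_t.
rewrite exprSr adM IH ad_t mulr1.
by rewrite mulrnAl -exprSr [RHS]mulrSr.
Qed.

Lemma weyl_mull_d y : weyl t d y -> weyl t d (d * y).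
Proof.
move=> /weyl_natP[n [c ->]]; rewrite mulr_sumr; apply: weyl_sum => i.
rewrite mulr_sumr; apply: weyl_sum => j; rewrite -scalerAr; apply: weylZ.
have -> : d * (t ^+ i * d ^+ j) = t ^+ i * d ^+ j.+1 + ad d (t ^+ i) * d ^+ j.
  by rewrite /ad mulrBl -!mulrA -exprS addrC subrK mulrA.
apply: weylD; first exact: weyl_monomial.
case: (val i) => [|i'].
  by rewrite expr0 ad1 mul0r -(scale0r 1); apply/weylZ/weyl1.
by rewrite ad_texpS mulrnAl -scaler_nat; apply/weylZ/weyl_monomial.
Qed.

Lemma weyl_mull_polyd p y : weyl t d y -> weyl t d (polyd d p * y).
Proof.
move=> wy; rewrite /polyd mulr_suml; apply: weyl_sum => i.
rewrite -scalerAl; apply: weylZ.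
by elim: (val i) => [|j IH]; rewrite ?expr0 ?mul1r // exprS -mulrA; apply: weyl_mull_d.
Qed.

Lemma weyl_polyd p : weyl t d (polyd d p).
Proof. by rewrite -[polyd d p]mulr1; apply/weyl_mull_polyd/weyl1. Qed.

Definition kdt x := exists n (r : nat -> {poly k}),
  x = \sum_(i < n) polyd d (r i) * t ^+ i.

Lemma kdt_widen n N (r : nat -> {poly k}) : (n <= N)%N ->
  \sum_(i < n) polyd d (r i) * t ^+ i =
  \sum_(i < N) polyd d (if (i < n)%N then r i else 0) * t ^+ i.
Proof.
move=> leNn; rewrite (big_ord_widen N (fun i => polyd d (r i) * t ^+ i) leNn).
by rewrite big_mkcond; apply: eq_bigr => i _; case: ltnP; rewrite ?polyd0 ?mul0r.
Qed.

Lemma kdtD x y : kdt x -> kdt y -> kdt (x + y).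
Proof.
move=> [n1 [r1 ->]] [n2 [r2 ->]].
exists (n1 + n2)%N, (fun i => (if (i < n1)%N then r1 i else 0) +
                               (if (i < n2)%N then r2 i else 0)).
rewrite (kdt_widen _ (leq_addr n2 n1)) (kdt_widen _ (leq_addl n1 n2)).
by rewrite -big_split; apply: eq_bigr => i _; rewrite polydD mulrDl.
Qed.

Lemma kdtZ a x : kdt x -> kdt (a *: x).
Proof.
move=> [n [r ->]]; exists n, (fun i => a *: r i).
by rewrite scaler_sumr; apply: eq_bigr => i _; rewrite polydZ scalerAl.
Qed.

Lemma kdtB x y : kdt x -> kdt y -> kdt (x - y).
Proof. by move=> kx ky; rewrite -scaleN1r; apply/kdtD/kdtZ. Qed.

Lemma kdt_sum m (F : 'I_m -> Q) : (forall i, kdt (F i)) -> kdt (\sum_(i < m) F i).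
Proof.
move=> kF; elim/big_rec: _ => [|i x _ kx]; last exact: kdtD.
by exists 0%N, (fun _ => 0); rewrite big_ord0.
Qed.

Lemma polyd_t_commutator p : polyd d p * t - t * polyd d p = polyd d p^`().
Proof.
elim/poly_ind: p => [|p c IH]; first by rewrite deriv0 polyd0 mulr0 mul0r subrr.
rewrite derivMXaddC !polydD !polydM polydX polydC -IH.
rewrite mulrDl mulrDr mulr_algl mulr_algr opprD addrACA subrr addr0.
have -> : polyd d p * d * t - t * (polyd d p * d) =
    polyd d p * (d * t - t * d) + (polyd d p * t - t * polyd d p) * d.
  by rewrite mulrBr mulrBl !mulrA addrA subrK.
by rewrite dt_commutator mulr1.
Qed.

Lemma kdt_mull_t x : kdt x -> kdt (t * x).
Proof.
move=> [n [r ->]]; rewrite mulr_sumr.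
have t_mono i : t * (polyd d (r i) * t ^+ i) =
    polyd d (r i) * t ^+ i.+1 - polyd d (r i)^`() * t ^+ i.
  by rewrite -polyd_t_commutator mulrBl -!mulrA -exprS opprB addrC subrK mulrA.
under eq_bigr => i _ do rewrite t_mono.
rewrite sumrB; apply: kdtB.
  exists n.+1, (fun i => if i is j.+1 then r j else 0).
  by rewrite big_ord_recl /= polyd0 mul0r add0r.
by exists n, (fun i => (r i)^`()).
Qed.

Lemma weyl_kdt x : weyl t d x -> kdt x.
Proof.
move=> /weyl_natP[n [c ->]]; apply: kdt_sum => i; apply: kdt_sum => j.
apply: kdtZ; elim: (val i) => [|i' IH]; last by rewrite exprS -mulrA; apply: kdt_mull_t.
by exists 1%N, (fun _ => 'X^j); rewrite big_ord1 !expr0 mul1r mulr1 polydXn.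
Qed.

Lemma kdt_lead n (r : nat -> {poly k}) :
  \sum_(i < n) polyd d (r i) * t ^+ i != 0 ->
  exists2 m, r m != 0 &
    \sum_(i < n) polyd d (r i) * t ^+ i = \sum_(i < m.+1) polyd d (r i) * t ^+ i.
Proof.
elim: n => [|n IH]; first by rewrite big_ord0 eqxx.
rewrite big_ord_recr /=; have [->|rn_neq0 _] := eqVneq (r n) 0.
  by rewrite polyd0 mul0r addr0.
by exists n; rewrite // big_ord_recr.
Qed.

(* [h] is the leading t-coefficient of [x]. *)
Lemma weyl_lead x : weyl t d x -> x != 0 ->
  exists m (h : {poly k}), [/\ tpoly_deg t d x m, ad_deg d x m, h != 0 &
                               adn d m x = m`!%:R * polyd d h].
Proof.
move=> /weyl_kdt[n [r ->]] /kdt_lead[m rm_neq0 ->].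
have x_deg : tpoly_deg t d (\sum_(i < m.+1) polyd d (r i) * t ^+ i) m.
  by exists (fun i => polyd d (r i)); rewrite polyd_eq0; split=> // i; apply: kd_polyd.
exists m, (r m); split => //; first exact: tpoly_deg_ad_deg.
exact: (adn_tpoly m (fun i => ad_polyd d (r i))).2.
Qed.

Lemma tdeg_unique u m1 m2 : tdeg t d u m1 -> tdeg t d u m2 -> m1 = m2.
Proof.
move=> [a [b [p [q [/tpoly_deg_ad_deg a_deg /tpoly_deg_ad_deg b_deg -> ->]]]]].
move=> [a' [b' [p' [q' [/tpoly_deg_ad_deg a'_deg /tpoly_deg_ad_deg b'_deg eu ->]]]]].
have [b_neq0 b'_neq0] := (ad_deg_neq0 b_deg, ad_deg_neq0 b'_deg).
have [X [Y [wX wY Y_neq0 eXY]]] := Qfrac (b'^-1 * b).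
have bY : b * Y = b' * X.
  have -> : b = b' * (X * Y^-1) by rewrite -eXY mulVKr ?Qdiv.
  by rewrite -mulrA mulrVK ?Qdiv.
have X_neq0 : X != 0.
  by apply: contraTneq (mulQ_neq0 b_neq0 Y_neq0) => X0; rewrite bY X0 mulr0 eqxx.
have aY : a * Y = a' * X.
  by rewrite -[a](mulrVK (Qdiv b_neq0)) -[a'](mulrVK (Qdiv b'_neq0)) -eu -!mulrA bY.
have [x [_ [_ X_deg _ _]]] := weyl_lead wX X_neq0.
have [y [_ [_ Y_deg _ _]]] := weyl_lead wY Y_neq0.
have bY_deg := ad_deg_mul b_deg Y_deg; rewrite bY in bY_deg.
have aY_deg := ad_deg_mul a_deg Y_deg; rewrite aY in aY_deg.
have := ad_deg_unique bY_deg (ad_deg_mul b'_deg X_deg).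
have := ad_deg_unique aY_deg (ad_deg_mul a'_deg X_deg).
lia.
Qed.

Lemma tdeg_frac u x w n m : u * x = w -> weyl t d x -> weyl t d w ->
  ad_deg d x n -> ad_deg d w m -> tdeg t d u (m%:Z - n%:Z).
Proof.
move=> uxw wx ww x_deg w_deg; have x_neq0 := ad_deg_neq0 x_deg.
have [n' [_ [x_tdeg x_deg' _ _]]] := weyl_lead wx x_neq0.
have [m' [_ [w_tdeg w_deg' _ _]]] := weyl_lead ww (ad_deg_neq0 w_deg).
rewrite (ad_deg_unique x_deg x_deg') (ad_deg_unique w_deg w_deg').
by exists w, x, m', n'; split => //; rewrite -uxw mulrK ?Qdiv.
Qed.

Section Generator.
Variables (s : bool) (S : Q -> Prop).
Hypothesis S_weyl : forall v, S v -> weyl t d v.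
Hypothesis S_sub : forall v w, S v -> S w -> S (v - w).
Hypothesis S_dact : forall p v, S v -> S (dact d s p v).

Section MinimalElement.
Variables (m : nat) (f : Q) (g : {poly k}).
Hypothesis deg_min : forall v n, S v -> v != 0 -> ad_deg d v n -> (m <= n)%N.
Hypotheses (Sf : S f) (f_adn_eq0 : adn d m.+1 f = 0).
Hypotheses (f_lead : adn d m f = m`!%:R * polyd d g) (g_neq0 : g != 0).
Hypothesis lead_min : forall v h, S v -> adn d m.+1 v = 0 ->
  adn d m v = m`!%:R * polyd d h -> h != 0 -> (size g <= size h)%N.

Lemma S_adn_eq0 w : S w -> adn d m w = 0 -> w = 0.
Proof.
move=> Sw adw_eq0; apply/eqP; apply: contraT => w_neq0.
have [n [_ [_ w_deg _ _]]] := weyl_lead (S_weyl Sw) w_neq0.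
have [+ _] := w_deg.
by rewrite (adn_eq0_leq adw_eq0 (deg_min Sw w_neq0 w_deg)) eqxx.
Qed.

Lemma ad_deg_dact p : p != 0 -> ad_deg d (dact d s p f) m.
Proof.
move=> p_neq0; split; rewrite adn_dact; last by rewrite f_adn_eq0 dactv0.
by rewrite f_lead dact_lead lead_neq0 // mulf_neq0.
Qed.

(* Euclidean division of leading coefficients: a remainder would be a smaller lead. *)
Lemma ad_deg_dactP v : S v -> ad_deg d v m -> exists p, v = dact d s p f.
Proof.
move=> Sv v_deg; have v_neq0 := ad_deg_neq0 v_deg.
have [n [h [_ v_deg' h_neq0 v_lead]]] := weyl_lead (S_weyl Sv) v_neq0.
rewrite -(ad_deg_unique v_deg v_deg') in v_lead.
exists (h %/ g); set w := v - dact d s (h %/ g) f.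
have Sw : S w by apply/S_sub/S_dact.
have w_adn_eq0 : adn d m.+1 w = 0 by rewrite adnB adn_dact f_adn_eq0 dactv0 v_deg.2 subrr.
have w_lead : adn d m w = m`!%:R * polyd d (h %% g).
  rewrite adnB adn_dact f_lead dact_lead v_lead -mulrBr -polydB.
  by rewrite {1}(divp_eq h g) addrAC subrr add0r.
have [r0|r_neq0] := eqVneq (h %% g) 0.
  by apply/eqP; rewrite -subr_eq0 -/w (S_adn_eq0 Sw) // w_lead r0 polyd0 mulr0.
by have := lead_min Sw w_adn_eq0 w_lead r_neq0; rewrite leqNgt ltn_modp g_neq0.
Qed.

End MinimalElement.

Lemma dmodule_generator : (exists v, S v /\ v != 0) ->
  exists f m, [/\ S f, f != 0,
    forall v n, S v -> v != 0 -> ad_deg d v n -> (m <= n)%N,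
    forall p, p != 0 -> ad_deg d (dact d s p f) m &
    forall v, S v -> ad_deg d v m -> exists p, v = dact d s p f].
Proof.
move=> [v0 [Sv0 v0_neq0]].
pose has_deg n := exists v, [/\ S v, v != 0 & ad_deg d v n].
have [m [[v1 [Sv1 v1_neq0 v1_deg]] m_min]] :
    exists m, has_deg m /\ forall n, has_deg n -> (m <= n)%N.
  apply: ex_minn_prop; have [n [_ [_ v0_deg _ _]]] := weyl_lead (S_weyl Sv0) v0_neq0.
  by exists n, v0.
have deg_min v n : S v -> v != 0 -> ad_deg d v n -> (m <= n)%N.
  by move=> Sv v_neq0 v_deg; apply: m_min; exists v.
pose has_lead j := exists (g : {poly k}) f, [/\ g != 0, size g = j, S f,
  adn d m.+1 f = 0 & adn d m f = m`!%:R * polyd d g].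
have [sz [[g [f [g_neq0 g_size Sf f_adn_eq0 f_lead]]] sz_min]] :
    exists sz, has_lead sz /\ forall j, has_lead j -> (sz <= j)%N.
  apply: ex_minn_prop.
  have [n [h [_ v1_deg' h_neq0 v1_lead]]] := weyl_lead (S_weyl Sv1) v1_neq0.
  rewrite -(ad_deg_unique v1_deg v1_deg') in v1_lead.
  by exists (size h), h, v1; split => //; case: v1_deg.
have lead_min v h : S v -> adn d m.+1 v = 0 ->
    adn d m v = m`!%:R * polyd d h -> h != 0 -> (size g <= size h)%N.
  by move=> Sv v_adn_eq0 v_lead h_neq0; rewrite g_size; apply: sz_min; exists h, v.
have dact_deg := ad_deg_dact f_adn_eq0 f_lead g_neq0.
have f_deg : ad_deg d f m by rewrite -[f](dact1 d s); apply/dact_deg/oner_neq0.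
exists f, m; split => //; first exact: ad_deg_neq0 f_deg.
exact: ad_deg_dactP deg_min Sf f_adn_eq0 f_lead g_neq0 lead_min.
Qed.

End Generator.

Lemma dact_generator_unique s (P : Q -> Prop) f g :
  (forall u, P u <-> exists p, u = dact d s p f) ->
  (forall u, P u <-> exists p, u = dact d s p g) -> f != 0 ->
  exists c : k, c != 0 /\ g = c *: f.
Proof.
move=> fP gP f_neq0.
have [p1 fg] : exists p, f = dact d s p g by apply/gP/fP; exists 1; rewrite dact1.
have [p2 gf] : exists p, g = dact d s p f by apply/fP/gP; exists 1; rewrite dact1.
have p12 : p1 * p2 = 1.
  apply/eqP; rewrite -subr_eq0 -polyd_eq0; move: (f_neq0); apply: contraTT => pd_neq0.
  have : dact d s (p1 * p2 - 1) f != 0 by rewrite /dact; case: ifP => _; exact: mulQ_neq0.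
  by rewrite dactB dact1 -dactM -gf -fg subrr eqxx.
have : p2 \is a GRing.unit by apply/unitrPr; exists p1; rewrite mulrC.
rewrite poly_unitE => /andP[/eqP p2_size p20_unit].
exists p2`_0; rewrite -unitfE p20_unit; split => //.
by rewrite gf {1}(size1_polyC (eq_leq p2_size)) dactC.
Qed.

(* [I^*] is not contained in [A_1], but [I^* x0] is for [x0] in [I], and
   deg_t u = deg_t (u x0) - deg_t x0; the ideal itself is the case [x0 = 1]. *)
Section MinimalDegree.
Variables (D : Q -> Prop) (s : bool) (x0 : Q) (n0 : nat).
Hypotheses (x0_weyl : weyl t d x0) (x0_deg : ad_deg d x0 n0).
Hypothesis D_weyl : forall u, D u -> weyl t d (u * x0).
Hypothesis D_sub : forall u v, D u -> D v -> D (u - v).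
Hypothesis D_dact : forall p u, D u -> D (dact d s p u).
Hypothesis dact_mulr : forall p u, dact d s p u * x0 = dact d s p (u * x0).

Let x0_neq0 : x0 != 0 := ad_deg_neq0 x0_deg.

Lemma D_tdeg u n : D u -> ad_deg d (u * x0) n -> tdeg t d u (n%:Z - n0%:Z).
Proof. by move=> Du; apply: tdeg_frac erefl x0_weyl (D_weyl Du) x0_deg. Qed.

Lemma D_tdegP u z : D u -> u != 0 -> tdeg t d u z ->
  exists n, ad_deg d (u * x0) n /\ z = n%:Z - n0%:Z.
Proof.
move=> Du u_neq0 u_tdeg.
have [n [_ [_ n_deg _ _]]] := weyl_lead (D_weyl Du) (mulQ_neq0 u_neq0 x0_neq0).
by exists n; split => //; apply: tdeg_unique u_tdeg (D_tdeg Du n_deg).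
Qed.

Section Generated.
Variables (e : Q) (m : nat).
Hypothesis De : D e.
Hypothesis deg_min : forall u n, D u -> u != 0 -> ad_deg d (u * x0) n -> (m <= n)%N.
Hypothesis dact_deg : forall p, p != 0 -> ad_deg d (dact d s p e * x0) m.
Hypothesis dact_degP : forall u, D u -> ad_deg d (u * x0) m -> exists p, u = dact d s p e.

Lemma tdeg_min u z : D u -> u != 0 -> tdeg t d u z -> m%:Z - n0%:Z <= z.
Proof.
move=> Du u_neq0 u_tdeg; have [n [n_deg ->]] := D_tdegP Du u_neq0 u_tdeg.
by have := deg_min Du u_neq0 n_deg; lia.
Qed.

Lemma mindeg_dact p : p != 0 -> mindeg t d D (dact d s p e).
Proof.
move=> p_neq0; have pe_deg := dact_deg p_neq0; rewrite /mindeg.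
have pe_neq0 : dact d s p e != 0.
  by apply: contraTneq (ad_deg_neq0 pe_deg) => ->; rewrite mul0r eqxx.
split=> //; first exact: D_dact.
exists (m%:Z - n0%:Z); split; first exact: D_tdeg (D_dact p De) pe_deg.
by move=> v n Dv v_neq0; apply: tdeg_min.
Qed.

Lemma mindeg_dactP u : mindeg t d D u -> exists p, u = dact d s p e.
Proof.
move=> [Du u_neq0 [z [u_tdeg z_min]]]; apply: dact_degP => //.
have [n [n_deg z_def]] := D_tdegP Du u_neq0 u_tdeg.
have e_deg : ad_deg d (e * x0) m by rewrite -[e](dact1 d s); apply/dact_deg/oner_neq0.
have e_neq0 : e != 0 by apply: contraTneq (ad_deg_neq0 e_deg) => ->; rewrite mul0r eqxx.
have := z_min _ _ De e_neq0 (D_tdeg De e_deg); rewrite z_def => le_nm.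
by have := deg_min Du u_neq0 n_deg => le_mn; have <- : n = m by lia.
Qed.

End Generated.

Lemma mindeg_generator : (exists u, D u /\ u != 0) ->
  exists e, [/\ D e, e != 0 &
    forall u, (u = 0 \/ mindeg t d D u) <-> exists p, u = dact d s p e].
Proof.
move=> [u0 [Du0 u0_neq0]].
pose S w := exists2 u, D u & w = u * x0.
have S_weyl w : S w -> weyl t d w by move=> [u Du ->]; apply: D_weyl.
have S_sub v w : S v -> S w -> S (v - w).
  by move=> [u Du ->] [u' Du' ->]; exists (u - u'); [exact: D_sub | rewrite mulrBl].
have S_dact p w : S w -> S (dact d s p w).
  by move=> [u Du ->]; exists (dact d s p u); [exact: D_dact | rewrite dact_mulr].
have S_nonzero : exists w, S w /\ w != 0.
  by exists (u0 * x0); split; [exists u0 | exact: mulQ_neq0].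
have [f [m [[e De ->] ex0_neq0 S_deg_min dact_deg dact_degP]]] :=
  dmodule_generator S_weyl S_sub S_dact S_nonzero.
have deg_min u n : D u -> u != 0 -> ad_deg d (u * x0) n -> (m <= n)%N.
  by move=> Du u_neq0; apply: S_deg_min; [exists u | exact: mulQ_neq0].
have dact_deg' p : p != 0 -> ad_deg d (dact d s p e * x0) m.
  by rewrite dact_mulr; apply: dact_deg.
have dact_degP' u : D u -> ad_deg d (u * x0) m -> exists p, u = dact d s p e.
  move=> Du u_deg; have [p] := dact_degP _ (ex_intro2 _ _ u Du erefl) u_deg.
  by rewrite -dact_mulr => /(mulIr (Qdiv x0_neq0)) ->; exists p.
exists e; split => //; first by apply: contraNneq ex0_neq0 => ->; rewrite mul0r.
move=> u; split=> [[->|u_min]|[p ->]].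
- by exists 0; rewrite dact0.
- exact: (mindeg_dactP De deg_min dact_deg' dact_degP' u_min).
have [->|p_neq0] := eqVneq p 0; first by left; rewrite dact0.
by right; apply: (mindeg_dact De deg_min dact_deg' p_neq0).
Qed.

End MinimalDegree.

Section Ideal.
Variable I : Q -> Prop.
Hypothesis I_ideal : right_ideal t d I.
Hypothesis I_nonzero : exists x, I x /\ x != 0.

Lemma right_ideal_sub u v : I u -> I v -> I (u - v).
Proof.
have [_ _ I_add I_mul] := I_ideal; move=> Iu Iv; apply: I_add => //.
by rewrite -mulrN1; apply: I_mul; rewrite // -scaleN1r; apply/weylZ/weyl1.
Qed.

Lemma right_ideal_generator : exists f, [/\ I f, f != 0 &
  forall u, (u = 0 \/ mindeg t d I u) <-> exists p, u = f * polyd d p].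
Proof.
have [I_weyl _ _ I_mul] := I_ideal.
apply: (@mindeg_generator I true 1 0) => //.
- exact: weyl1.
- exact: ad_deg1.
- by move=> u Iu; rewrite mulr1; apply: I_weyl.
- exact: right_ideal_sub.
- by move=> p u Iu; apply: I_mul => //; apply: weyl_polyd.
- by move=> p u; rewrite !mulr1.
Qed.

Lemma dual_generator : exists e, [/\ dual t d I e, e != 0 &
  forall u, (u = 0 \/ mindeg t d (dual t d I) u) <-> exists p, u = polyd d p * e].
Proof.
have [I_weyl _ _ _] := I_ideal; have [x [Ix x_neq0]] := I_nonzero.
have [n [_ [_ x_deg _ _]]] := weyl_lead (I_weyl x Ix) x_neq0.
apply: (@mindeg_generator (dual t d I) false x n) => //.
- exact: I_weyl.
- by move=> u Du; apply: Du.
- by move=> u v Du Dv y Iy; rewrite mulrBl; apply: weylB; [apply: Du | apply: Dv].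
- by move=> p u Du y Iy; rewrite -mulrA; apply/weyl_mull_polyd/Du.
- by move=> p u; rewrite /dact mulrA.
- by exists 1; split; rewrite ?oner_neq0 // => y Iy; rewrite mul1r; apply: I_weyl.
Qed.

End Ideal.
End WeylQuotient.

Theorem corollary2 (k : fieldType) (Q : unitAlgType k) (t d : Q)
    (I : Q -> Prop) :
  [pchar k] =i pred0 ->
  weyl_quotient t d ->
  right_ideal t d I ->
  (exists x, I x /\ x != 0) ->
  (exists f : Q,
      (I f /\ forall u, (u = 0 \/ mindeg t d I u) <->
                         exists p : {poly k}, u = f * polyd d p)
      /\ forall g : Q,
           (I g /\ forall u, (u = 0 \/ mindeg t d I u) <->
                              exists p : {poly k}, u = g * polyd d p) ->
           exists c : k, c != 0 /\ g = c *: f)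
  /\
  (exists e : Q,
      (dual t d I e /\ forall u, (u = 0 \/ mindeg t d (dual t d I) u) <->
                                  exists p : {poly k}, u = polyd d p * e)
      /\ forall g : Q,
           (dual t d I g /\ forall u, (u = 0 \/ mindeg t d (dual t d I) u) <->
                                       exists p : {poly k}, u = polyd d p * g) ->
           exists c : k, c != 0 /\ g = c *: e).
Proof.
move=> char0 [dt_comm mono_free Qdiv Qfrac] I_ideal I_nonzero; split.
  have [f [If f_neq0 f_gen]] :=
    right_ideal_generator char0 dt_comm mono_free Qdiv Qfrac I_ideal I_nonzero.
  exists f; split => // g [_ g_gen].
  exact: (dact_generator_unique mono_free Qdiv (s := true) f_gen g_gen).
have [e [De e_neq0 e_gen]] :=
  dual_generator char0 dt_comm mono_free Qdiv Qfrac I_ideal I_nonzero.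
exists e; split => // g [_ g_gen].
exact: (dact_generator_unique mono_free Qdiv (s := false) e_gen g_gen).
Qed.
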